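(* Every $2\times2\times2$ quaternion tensor $T$ satisfies $\mathrm{rank}(T)\le3$.
   Context: $\mathbb{H}$ denotes the real quaternions. An $n_1\times n_2\times n_3$ quaternion tensor is an array $T=(T_{ijk})$ with entries in $\mathbb{H}$, $1\le i\le n_1$, $1\le j\le n_2$, $1\le k\le n_3$; it is written $T=(A_1;\dots;A_{n_2})$ where the frontal slice $A_j$ is the $n_1\times n_3$ matrix $(T_{ijk})_{i,k}$. A nonzero tensor is simple if $T_{ijk}=a_ib_jc_k$ (quaternion product in this order) for some $\vec a\in\mathbb{H}^{n_1},\vec b\in\mathbb{H}^{n_2},\vec c\in\mathbb{H}^{n_3}$. The rank of $T$ is the least number of simple tensors summing to $T$ (the zero tensor has rank $0$). *)

From HB Require Import structures.
From mathcomp Require Import all_boot all_order all_algebra.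
From mathcomp Require Import reals.
Set Implicit Arguments. Unset Strict Implicit. Unset Printing Implicit Defensive.
Import Order.TTheory GRing.Theory Num.Theory.
Local Open Scope ring_scope.

Record quat (R : realType) := Quat { qre : R; qi : R; qj : R; qk : R }.

Definition qzero (R : realType) : quat R := Quat 0 0 0 0.

Definition qadd (R : realType) (p q : quat R) : quat R :=
  Quat (qre p + qre q) (qi p + qi q) (qj p + qj q) (qk p + qk q).

(* Hamilton product: i^2 = j^2 = k^2 = ijk = -1. *)
Definition qmul (R : realType) (p q : quat R) : quat R :=
  Quat (qre p * qre q - qi p * qi q - qj p * qj q - qk p * qk q)
       (qre p * qi q + qi p * qre q + qj p * qk q - qk p * qj q)
       (qre p * qj q - qi p * qk q + qj p * qre q + qk p * qi q)
       (qre p * qk q + qi p * qj q - qj p * qi q + qk p * qre q).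

Definition qtensor (R : realType) (n1 n2 n3 : nat) :=
  'I_n1 -> 'I_n2 -> 'I_n3 -> quat R.

Definition simple_qtensor (R : realType) (n1 n2 n3 : nat)
    (T : qtensor R n1 n2 n3) : Prop :=
  (exists i j k, T i j k <> qzero R) /\
  exists (a : 'I_n1 -> quat R) (b : 'I_n2 -> quat R) (c : 'I_n3 -> quat R),
    forall i j k, T i j k = qmul (qmul (a i) (b j)) (c k).

Definition qrank_le (R : realType) (n1 n2 n3 : nat)
    (T : qtensor R n1 n2 n3) (r : nat) : Prop :=
  exists (m : nat) (S : 'I_m -> qtensor R n1 n2 n3),
    (m <= r)%N /\ (forall t, simple_qtensor (S t)) /\
    forall i j k, T i j k = \big[@qadd R/qzero R]_(t < m) S t i j k.

From HB Require Import structures.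
From mathcomp Require Import all_boot all_order all_algebra.
From mathcomp Require Import reals.
From mathcomp Require Import ring lra.
Set Implicit Arguments. Unset Strict Implicit. Unset Printing Implicit Defensive.
Import GRing.Theory Num.Theory.
Local Open Scope ring_scope.

(* For a nonzero T with pivot T i0 j0 k0 we subtract from the second slice a
   multiple of the first so that it is nonzero at (j0, k0) as well; the cross
   approximations of the two slices then yield two product tensors that match
   T except on the fibre (., j1, k1) opposite to the pivot, and the residual,
   being supported on a single fibre, is a third product tensor. *)

Section QuaternionDivisionRing.
Variable R : realType.
Implicit Types p q : quat R.

Definition quat_to_tuple p := (qre p, qi p, qj p, qk p).
Definition tuple_to_quat (t : R * R * R * R) :=
  let: (a, b, c, d) := t in Quat a b c d.
Lemma quat_to_tupleK : cancel quat_to_tuple tuple_to_quat. Proof. by case. Qed.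
HB.instance Definition _ := Choice.copy (quat R) (can_type quat_to_tupleK).

Definition qopp p := Quat (- qre p) (- qi p) (- qj p) (- qk p).
Definition qone := Quat (1 : R) 0 0 0.

(* Each axiom is a componentwise polynomial identity. *)
Ltac quat_ring := rewrite /qadd /qmul /qopp /qone /=; congr Quat; ring.

Lemma qaddA : associative (@qadd R).
Proof. by move=> [? ? ? ?] [? ? ? ?] [? ? ? ?]; quat_ring. Qed.
Lemma qaddC : commutative (@qadd R).
Proof. by move=> [? ? ? ?] [? ? ? ?]; quat_ring. Qed.
Lemma qadd0 : left_id (qzero R) (@qadd R).
Proof. by move=> [? ? ? ?]; quat_ring. Qed.
Lemma qaddN : left_inverse (qzero R) qopp (@qadd R).
Proof. by move=> [? ? ? ?]; quat_ring. Qed.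
HB.instance Definition _ :=
  GRing.isZmodule.Build (quat R) qaddA qaddC qadd0 qaddN.

Lemma qmulA : associative (@qmul R).
Proof. by move=> [? ? ? ?] [? ? ? ?] [? ? ? ?]; quat_ring. Qed.
Lemma qmul1 : left_id qone (@qmul R).
Proof. by move=> [? ? ? ?]; quat_ring. Qed.
Lemma qmulr1 : right_id qone (@qmul R).
Proof. by move=> [? ? ? ?]; quat_ring. Qed.
Lemma qmulDl : left_distributive (@qmul R) (@qadd R).
Proof. by move=> [? ? ? ?] [? ? ? ?] [? ? ? ?]; quat_ring. Qed.
Lemma qmulDr : right_distributive (@qmul R) (@qadd R).
Proof. by move=> [? ? ? ?] [? ? ? ?] [? ? ? ?]; quat_ring. Qed.
Lemma qone_neq0 : qone != 0.
Proof. by apply/eqP => -[]; apply/eqP; rewrite oner_neq0. Qed.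
HB.instance Definition _ := GRing.Zmodule_isNzRing.Build (quat R)
  qmulA qmul1 qmulr1 qmulDl qmulDr qone_neq0.

(* The squared norm, and the inverse conj(p) / |p|^2 (which sends 0 to 0). *)
Definition qnorm2 p := qre p ^+ 2 + qi p ^+ 2 + qj p ^+ 2 + qk p ^+ 2.
Definition qinv p :=
  Quat (qre p / qnorm2 p) (- qi p / qnorm2 p) (- qj p / qnorm2 p)
       (- qk p / qnorm2 p).

Lemma qnorm2_neq0 p : p != 0 -> qnorm2 p != 0.
Proof.
case: p => a b c d nz_p; apply: contra nz_p; rewrite /qnorm2 /= => /eqP n0.
by have [-> -> -> ->] : [/\ a = 0, b = 0, c = 0 & d = 0] by split; nra.
Qed.

Lemma qmulV : {in predC1 0, left_inverse 1 qinv *%R}.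
Proof.
move=> [a b c d] /qnorm2_neq0; rewrite /qnorm2 /= => n0.
by rewrite /GRing.mul /= /qmul /qinv /qnorm2 /=; congr Quat; field.
Qed.

Lemma qmulrV : {in predC1 0, right_inverse 1 qinv *%R}.
Proof.
move=> [a b c d] /qnorm2_neq0; rewrite /qnorm2 /= => n0.
by rewrite /GRing.mul /= /qmul /qinv /qnorm2 /=; congr Quat; field.
Qed.

Lemma qunitP p q : q * p = 1 /\ p * q = 1 -> p \in predC1 0.
Proof.
case=> _ pq1; apply/eqP => p0; move/eqP: pq1.
by rewrite p0 mul0r eq_sym oner_eq0.
Qed.

Lemma qinv_out : {in [predC predC1 0], qinv =1 id}.
Proof.
move=> p; rewrite !inE negbK => /eqP ->.
by rewrite /qinv /qnorm2 /=; congr Quat; rewrite ?oppr0 mul0r.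
Qed.

HB.instance Definition _ := GRing.NzRing_hasMulInverse.Build (quat R)
  qmulV qmulrV qunitP qinv_out.

Lemma qunitE p : (p \is a GRing.unit) = (p != 0). Proof. by []. Qed.

End QuaternionDivisionRing.

Section RankBookkeeping.
Variables (R : realType) (n1 n2 n3 : nat).
Implicit Types T S : qtensor R n1 n2 n3.

Definition product_form S :=
  exists (a : 'I_n1 -> quat R) (b : 'I_n2 -> quat R) (c : 'I_n3 -> quat R),
    forall i j k, S i j k = a i * b j * c k.

Lemma qrank_le0 T : (forall i j k, T i j k = 0) -> qrank_le T 0.
Proof.
move=> T0; exists 0%N, (fun=> T); split=> //.
by split=> [[]|i j k]; rewrite ?big_ord0.
Qed.

Lemma qrank_le_mono T m m' : (m <= m')%N -> qrank_le T m -> qrank_le T m'.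
Proof.
move=> le_mm' [r [S [le_rm HS]]]; exists r, S; split=> //.
exact: leq_trans le_mm'.
Qed.

(* Adding a product tensor S to a tensor of rank <= m gives rank <= m + 1:
   S is either zero, or simple. *)
Lemma qrank_le_add T S T' m :
  qrank_le T m -> product_form S ->
  (forall i j k, T' i j k = T i j k + S i j k) -> qrank_le T' m.+1.
Proof.
move=> [r [F [le_rm [simpleF sumF]]]] prodS defT'.
have [S0|] := boolP [forall i, forall j, forall k, S i j k == 0].
  exists r, F; split; [exact: leqW | split=> // i j k].
  by move/forallP: S0 => /(_ i)/forallP/(_ j)/forallP/(_ k)/eqP S0;
     rewrite defT' S0 addr0 sumF.
rewrite !negb_forall => /existsP[i /existsP[j /existsP[k /eqP nzS]]].
pose F' (t : 'I_r.+1) := if unlift ord0 t is Some t' then F t' else S.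
exists r.+1, F'; split=> //; split=> [t|i' j' k'].
  rewrite /F'; case: unliftP => [t' _|_]; first exact: simpleF.
  by split; first exists i, j, k.
change (T' i' j' k' = \sum_(t < r.+1) F' t i' j' k').
rewrite big_ord_recl /F' unlift_none addrC defT' sumF; congr (_ + _).
by apply: eq_bigr => t _; rewrite liftK.
Qed.

Lemma qrank_le_product S : product_form S -> qrank_le S 1.
Proof.
move=> prodS; apply: (qrank_le_add (T := fun _ _ _ => 0) _ prodS).
  exact: qrank_le0.
by move=> i j k; rewrite add0r.
Qed.

End RankBookkeeping.

Definition cross (U : unitRingType) (J K : Type) (M : J -> K -> U) j0 k0 j k :=
  M j k0 * (M j0 k0)^-1 * M j0 k.

Lemma cross_exact (U : unitRingType) (J K : eqType) (M : J -> K -> U) j0 k0 j k :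
  M j0 k0 \is a GRing.unit -> (j == j0) || (k == k0) -> cross M j0 k0 j k = M j k.
Proof.
rewrite /cross => uM /orP[/eqP-> | /eqP->]; first by rewrite mulrV ?mul1r.
by rewrite mulrVK.
Qed.

Lemma cross_product_form (R : realType) n1 n2 n3 (w : 'I_n1 -> quat R)
    (M : 'I_n2 -> 'I_n3 -> quat R) j0 k0 :
  product_form (fun i j k => w i * cross M j0 k0 j k).
Proof.
by exists w, (fun j => M j k0 * (M j0 k0)^-1), (fun k => M j0 k) => i j k;
   rewrite /cross !mulrA.
Qed.

(* In 'I_2, the element other than x. *)
Definition other (x : 'I_2) : 'I_2 := lift x ord0.

Lemma other_neq (x : 'I_2) : (other x == x) = false.
Proof. by rewrite eq_sym eq_liftF. Qed.

Lemma otherP (x y : 'I_2) : y != x -> y = other x.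
Proof. by case: (unliftP x y) => [j -> _ | ->]; [rewrite (ord1 j) | rewrite eqxx]. Qed.

Lemma fibre_product_form (R : realType) n1 (T : qtensor R n1 2 2) j0 k0 :
  (forall i j k, (j == j0) || (k == k0) -> T i j k = 0) -> product_form T.
Proof.
move=> T0; exists (fun i => T i (other j0) (other k0)),
  (fun j => (j != j0)%:R), (fun k => (k != k0)%:R) => i j k.
have [jk0 | ] := boolP ((j == j0) || (k == k0)).
  by rewrite T0 //; case/orP: jk0 => /eqP->; rewrite eqxx ?mulr0 ?mul0r.
by rewrite negb_or => /andP[/otherP-> /otherP->]; rewrite !other_neq !mulr1.
Qed.

Lemma qrank_le3_pivot (R : realType) (T : qtensor R 2 2 2) i0 j0 k0 :
  T i0 j0 k0 != 0 -> qrank_le T 3.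
Proof.
move=> nzT.
(* Shift the second slice by a multiple of the first so that it is nonzero
   at the pivot position too. *)
pose P := T i0; pose lam : quat R := if T (other i0) j0 k0 == 0 then -1 else 0.
pose Q j k := T (other i0) j k - lam * P j k.
have nzQ : Q j0 k0 != 0.
  rewrite /Q /lam; have [-> | ?] := eqVneq (T (other i0) j0 k0) 0.
    by rewrite mulN1r opprK add0r.
  by rewrite mul0r subr0.
pose S1 : qtensor R 2 2 2 := fun i j k =>
  (if i == i0 then 1 else lam) * cross P j0 k0 j k.
pose S2 : qtensor R 2 2 2 := fun i j k =>
  (if i == i0 then 0 else 1) * cross Q j0 k0 j k.
pose S3 : qtensor R 2 2 2 := fun i j k => T i j k - S1 i j k - S2 i j k.
have S12_exact i j k : (j == j0) || (k == k0) -> T i j k = S1 i j k + S2 i j k.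
  move=> jk0; rewrite /S1 /S2 !cross_exact ?qunitE //.
  have [-> | /otherP->] := eqVneq i i0; first by rewrite mul1r mul0r addr0.
  by rewrite mul1r /Q addrC subrK.
pose S12 : qtensor R 2 2 2 := fun i j k => S1 i j k + S2 i j k.
apply: (@qrank_le_add _ _ _ _ S12 S3 _ 2).
- apply: (@qrank_le_add _ _ _ _ S1 S2 _ 1) => //.
  + exact/qrank_le_product/cross_product_form.
  + exact: cross_product_form.
- apply: fibre_product_form => i j k /S12_exact T_S12.
  by rewrite /S3 T_S12 -addrA -opprD subrr.
- by move=> i j k; rewrite /S3 -(addrA (T i j k)) -opprD subrKC.
Qed.

Theorem mainTheorem5 (R : realType) (T : qtensor R 2 2 2) : qrank_le T 3.
Proof.
have [T0 | ] := boolP [forall i, forall j, forall k, T i j k == 0].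
  apply: (@qrank_le_mono _ _ _ _ _ 0) => //; apply: qrank_le0 => i j k.
  by move/forallP: T0 => /(_ i)/forallP/(_ j)/forallP/(_ k)/eqP.
rewrite !negb_forall => /existsP[i /existsP[j /existsP[k]]].
exact: qrank_le3_pivot.
Qed.
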